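(* (Completeness of IML1.) Let $\Gamma$ be an IML1-theory and $\varphi$ a formula with $\varphi\notin\Gamma$. Then there exist an nIML1-model $\langle W,\mathcal{N},V\rangle$ and a world $v\in W$ such that $v\Vdash\psi$ for every $\psi\in\Gamma$ and $v\nVdash\varphi$.
   Context: Formulas are built from a denumerable set $PV$ of propositional variables and $\bot$ using $\land,\lor,\rightarrow$ and unary $\Delta$; $\lnot\varphi$ abbreviates $\varphi\rightarrow\bot$. The axioms of IML1 are all instances of the axiom schemes of intuitionistic propositional calculus (in this language), of K: $\Delta(\varphi\rightarrow\psi)\rightarrow(\Delta\varphi\rightarrow\Delta\psi)$ and of T: $\Delta\varphi\rightarrow\varphi$. An IML1-theory is a set of formulas containing all axioms and closed under modus ponens and under RN (if $\varphi$ is in the set then so is $\Delta\varphi$). An nIML1-frame is a pair $\langle W,\mathcal{N}\rangle$, $W\neq\emptyset$, $\mathcal{N}:W\to P(P(W))$, such that for all $w$: (a) $w\in\bigcap\mathcal{N}_w$; (b) $\bigcap\mathcal{N}_w\in\mathcal{N}_w$; (c) $u\in\bigcap\mathcal{N}_w\Rightarrow\bigcap\mathcal{N}_u\subseteq\bigcap\mathcal{N}_w$; (d) $\bigcap\mathcal{N}_w\subseteq X\subseteq\bigcup\mathcal{N}_w\Rightarrow X\in\mathcal{N}_w$; (e) $u\in\bigcap\mathcal{N}_w\Rightarrow\bigcup\mathcal{N}_u\subseteq\bigcup\mathcal{N}_w$ ($\bigcap\mathcal{N}_w$, $\bigcup\mathcal{N}_w$ being the intersection and union of the family $\mathcal{N}_w$).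 An nIML1-model adds $V:PV\to P(W)$ with $w\in V(q)\Rightarrow\bigcap\mathcal{N}_w\subseteq V(q)$. Forcing: $w\Vdash q$ iff $w\in V(q)$; $w\nVdash\bot$; $\land,\lor$ pointwise; $w\Vdash\varphi\rightarrow\psi$ iff every $v\in\bigcap\mathcal{N}_w$ has $v\nVdash\varphi$ or $v\Vdash\psi$; $w\Vdash\Delta\varphi$ iff every $v\in\bigcup\mathcal{N}_w$ has $v\Vdash\varphi$. *)

Inductive formula : Type :=
| Var : nat -> formula
| Bot : formula
| And : formula -> formula -> formula
| Or : formula -> formula -> formula
| Imp : formula -> formula -> formula
| Delta : formula -> formula.

Definition Neg (p : formula) : formula := Imp p Bot.

Inductive ipc_axiom : formula -> Prop :=
| A1 : forall p q, ipc_axiom (Imp p (Imp q p))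
| A2 : forall p q r,
    ipc_axiom (Imp (Imp p (Imp q r)) (Imp (Imp p q) (Imp p r)))
| A3 : forall p q, ipc_axiom (Imp (And p q) p)
| A4 : forall p q, ipc_axiom (Imp (And p q) q)
| A5 : forall p q, ipc_axiom (Imp p (Imp q (And p q)))
| A6 : forall p q, ipc_axiom (Imp p (Or p q))
| A7 : forall p q, ipc_axiom (Imp q (Or p q))
| A8 : forall p q r,
    ipc_axiom (Imp (Imp p r) (Imp (Imp q r) (Imp (Or p q) r)))
| A9 : forall p, ipc_axiom (Imp Bot p).

Inductive iml1_axiom : formula -> Prop :=
| Ax_ipc : forall p, ipc_axiom p -> iml1_axiom p
| Ax_K : forall p q,
    iml1_axiom (Imp (Delta (Imp p q)) (Imp (Delta p) (Delta q)))
| Ax_T : forall p, iml1_axiom (Imp (Delta p) p).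

Definition IML1_theory (Gamma : formula -> Prop) : Prop :=
  (forall p, iml1_axiom p -> Gamma p) /\
  (forall p q, Gamma (Imp p q) -> Gamma p -> Gamma q) /\
  (forall p, Gamma p -> Gamma (Delta p)).

Section Frames.
Variable W : Type.
Variable N : W -> (W -> Prop) -> Prop.

Definition bigcapN (w : W) : W -> Prop := fun x => forall X, N w X -> X x.
Definition bigcupN (w : W) : W -> Prop := fun x => exists X, N w X /\ X x.

Definition nIML1_frame : Prop :=
  inhabited W /\
  (forall w, bigcapN w w) /\
  (forall w, N w (bigcapN w)) /\
  (forall w u, bigcapN w u -> forall x, bigcapN u x -> bigcapN w x) /\
  (forall w (X : W -> Prop),
      (forall x, bigcapN w x -> X x) ->
      (forall x, X x -> bigcupN w x) -> N w X) /\
  (forall w u, bigcapN w u -> forall x, bigcupN u x -> bigcupN w x).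

Variable V : nat -> W -> Prop.

Definition nIML1_model : Prop :=
  nIML1_frame /\
  (forall q w, V q w -> forall x, bigcapN w x -> V q x).

Fixpoint forces (w : W) (p : formula) : Prop :=
  match p with
  | Var q => V q w
  | Bot => False
  | And p1 p2 => forces w p1 /\ forces w p2
  | Or p1 p2 => forces w p1 \/ forces w p2
  | Imp p1 p2 => forall v, bigcapN w v -> ~ forces v p1 \/ forces v p2
  | Delta p1 => forall v, bigcupN w v -> forces v p1
  end.
End Frames.

(* Worlds are prime theories: consistent, prime sets of
   formulas closed under derivability from the IML1-theorems.  A world w sees
   by inclusion the worlds R w = {u | w ⊆ u} and through Delta the worlds
   U w = {u | Delta p ∈ w implies p ∈ u}; axiom T gives R w ⊆ U w, and N w is
   the interval {X | R w ⊆ X ⊆ U w}, whose intersection and union are R w and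
   U w.  The truth lemma needs countermodels, supplied by Lindenbaum's lemma:
   the deduction theorem handles implication, and since axiom K and RN make
   {p | Delta p ∈ w} deductively closed, Delta p ∉ w is refuted by a prime
   extension of that set avoiding p. *)

From Stdlib Require Import List Lia Classical Cantor.
Import ListNotations.

Fixpoint formulas_upto (n : nat) : list formula :=
  match n with
  | 0 => [Bot; Var 0]
  | S m =>
      let L := formulas_upto m in
      Var (S m) :: L
        ++ flat_map (fun a => flat_map (fun b => [And a b; Or a b; Imp a b]) L) L
        ++ map Delta L
  end.

Lemma formulas_upto_mono n m p :
  n <= m -> In p (formulas_upto n) -> In p (formulas_upto m).
Proof.
  induction 1 as [|m _ IH]; intro Hp; auto.
  simpl. right. apply in_or_app. left. auto.
Qed.

Lemma formulas_upto_binary n a b :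
  In a (formulas_upto n) -> In b (formulas_upto n) ->
  In (And a b) (formulas_upto (S n)) /\ In (Or a b) (formulas_upto (S n)) /\
  In (Imp a b) (formulas_upto (S n)).
Proof.
  intros Ha Hb.
  assert (Hab : forall c, In c [And a b; Or a b; Imp a b] ->
                          In c (formulas_upto (S n))).
  { intros c Hc. simpl. right. apply in_or_app. right. apply in_or_app. left.
    apply in_flat_map. exists a. split; auto.
    apply in_flat_map. exists b. split; auto. }
  repeat split; apply Hab; simpl; auto.
Qed.

Lemma formulas_upto_exhaustive p : exists n, In p (formulas_upto n).
Proof.
  induction p as [[|k]| |p1 [n1 H1] p2 [n2 H2]|p1 [n1 H1] p2 [n2 H2]
                  |p1 [n1 H1] p2 [n2 H2]|p [n H]];
    try (exists (S (max n1 n2));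
         apply formulas_upto_binary;
         [apply (formulas_upto_mono n1) | apply (formulas_upto_mono n2)];
         auto; lia).
  - exists 0. simpl. auto.
  - exists (S k). simpl. auto.
  - exists 0. simpl. auto.
  - exists (S n). simpl. right. do 2 (apply in_or_app; right). apply in_map, H.
Qed.

Definition enum_formula (k : nat) : formula :=
  let (i, n) := of_nat k in nth i (formulas_upto n) Bot.

Lemma enum_formula_surj p : exists k, enum_formula k = p.
Proof.
  destruct (formulas_upto_exhaustive p) as [n Hn].
  destruct (In_nth _ _ Bot Hn) as [i [_ Hi]].
  exists (to_nat (i, n)). unfold enum_formula. rewrite cancel_of_to. exact Hi.
Qed.

Inductive iml1_theorem : formula -> Prop :=
| thm_axiom p : iml1_axiom p -> iml1_theorem p
| thm_mp p q : iml1_theorem (Imp p q) -> iml1_theorem p -> iml1_theorem q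
| thm_rn p : iml1_theorem p -> iml1_theorem (Delta p).

(* Derivability from hypotheses: RN applies to theorems only, never to
   hypotheses, so the deduction theorem holds. *)
Inductive derivable (S : formula -> Prop) : formula -> Prop :=
| der_theorem p : iml1_theorem p -> derivable S p
| der_hyp p : S p -> derivable S p
| der_mp p q : derivable S (Imp p q) -> derivable S p -> derivable S q.

Definition extend (S : formula -> Prop) (a : formula) : formula -> Prop :=
  fun x => S x \/ x = a.

Lemma derivable_ipc S p : ipc_axiom p -> derivable S p.
Proof. intro H. apply der_theorem, thm_axiom, Ax_ipc, H. Qed.

Lemma derivable_mono (S T : formula -> Prop) p :
  (forall x, S x -> T x) -> derivable S p -> derivable T p.
Proof. intros HST H. induction H; eauto using derivable. Qed.

Lemma derivable_imp_refl S a : derivable S (Imp a a).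
Proof.
  apply (der_mp _ (Imp a (Imp a a))); [|apply derivable_ipc, A1].
  apply (der_mp _ (Imp a (Imp (Imp a a) a))); apply derivable_ipc; constructor.
Qed.

Lemma deduction S a p : derivable (extend S a) p -> derivable S (Imp a p).
Proof.
  induction 1 as [p Hp|p [Hp| ->]|p q _ IHpq _ IHp].
  - apply (der_mp _ p); [apply derivable_ipc, A1 | apply der_theorem, Hp].
  - apply (der_mp _ p); [apply derivable_ipc, A1 | apply der_hyp, Hp].
  - apply derivable_imp_refl.
  - apply (der_mp _ (Imp a p)); [|exact IHp].
    apply (der_mp _ (Imp a (Imp p q))); [apply derivable_ipc, A2 | exact IHpq].
Qed.

Lemma derivable_cut S a p :
  derivable S a -> derivable (extend S a) p -> derivable S p.
Proof. intros Ha Hp. apply (der_mp _ a); [apply deduction, Hp | exact Ha]. Qed.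

Lemma IML1_theory_derivable Gamma p :
  IML1_theory Gamma -> derivable Gamma p -> Gamma p.
Proof.
  intros [Hax [Hmp Hrn]].
  induction 1 as [p Hp| |]; eauto.
  induction Hp; eauto.
Qed.

Record prime_theory : Type := {
  mem : formula -> Prop;
  mem_derivable : forall p, derivable mem p -> mem p;
  mem_consistent : ~ mem Bot;
  mem_prime : forall p q, mem (Or p q) -> mem p \/ mem q }.

Section Lindenbaum.
Variable S0 : formula -> Prop.
Variable goal : formula.
Hypothesis S0_goal : ~ derivable S0 goal.

Fixpoint stage (k : nat) : formula -> Prop :=
  match k with
  | 0 => S0
  | S k' => fun x =>
      stage k' x \/
      (x = enum_formula k' /\ ~ derivable (extend (stage k') (enum_formula k')) goal)
  end.

Definition saturation : formula -> Prop := fun x => exists k, stage k x.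

Lemma stage_mono k m x : k <= m -> stage k x -> stage m x.
Proof. induction 1; simpl; auto. Qed.

Lemma stage_goal k : ~ derivable (stage k) goal.
Proof.
  induction k as [|k IH]; [exact S0_goal|].
  destruct (classic (derivable (extend (stage k) (enum_formula k)) goal)) as [H|H];
    intro D.
  - apply IH. revert D. apply derivable_mono. simpl. intros x [Hx|[_ Hx]]; tauto.
  - apply H. revert D. apply derivable_mono. intros x [Hx|[-> _]]; [left|right]; auto.
Qed.

Lemma derivable_saturation_stage p :
  derivable saturation p -> exists k, derivable (stage k) p.
Proof.
  induction 1 as [p Hp|p [k Hk]|p q _ [k1 H1] _ [k2 H2]].
  - exists 0. apply der_theorem, Hp.
  - exists k. apply der_hyp, Hk.
  - exists (max k1 k2).
    apply (der_mp _ p); eapply derivable_mono; try eassumption;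
      intros x Hx; eapply stage_mono; try eassumption; lia.
Qed.

Lemma saturation_goal : ~ derivable saturation goal.
Proof.
  intro D. destruct (derivable_saturation_stage _ D) as [k Hk].
  exact (stage_goal k Hk).
Qed.

Lemma saturation_maximal p : ~ derivable (extend saturation p) goal -> saturation p.
Proof.
  intro H. destruct (enum_formula_surj p) as [k <-].
  exists (S k). simpl. right. split; [reflexivity|].
  intro D. apply H. revert D. apply derivable_mono.
  intros x [Hx| ->]; [left; exists k|right]; auto.
Qed.

Lemma saturation_derivable p : derivable saturation p -> saturation p.
Proof.
  intro D. apply saturation_maximal. intro D'.
  apply saturation_goal, (derivable_cut _ p); assumption.
Qed.

Lemma saturation_consistent : ~ saturation Bot.
Proof.
  intro H. apply saturation_goal.
  apply (der_mp _ Bot); [apply derivable_ipc, A9 | apply der_hyp, H].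
Qed.

Lemma saturation_prime a b : saturation (Or a b) -> saturation a \/ saturation b.
Proof.
  intro H. apply NNPP. intros [Ha Hb]%not_or_and.
  assert (Da : derivable saturation (Imp a goal)).
  { apply deduction, NNPP. intro D. apply Ha, saturation_maximal, D. }
  assert (Db : derivable saturation (Imp b goal)).
  { apply deduction, NNPP. intro D. apply Hb, saturation_maximal, D. }
  apply saturation_goal, (der_mp _ (Or a b)); [|apply der_hyp, H].
  apply (der_mp _ (Imp b goal)); [|exact Db].
  apply (der_mp _ (Imp a goal)); [apply derivable_ipc, A8 | exact Da].
Qed.

Lemma lindenbaum :
  exists w : prime_theory, (forall x, S0 x -> mem w x) /\ ~ mem w goal.
Proof.
  exists {| mem := saturation; mem_derivable := saturation_derivable;
            mem_consistent := saturation_consistent; mem_prime := saturation_prime |}.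
  split; simpl.
  - intros x Hx. exists 0. exact Hx.
  - intro H. apply saturation_goal, der_hyp, H.
Qed.
End Lindenbaum.

Lemma mem_mp (w : prime_theory) p q : mem w (Imp p q) -> mem w p -> mem w q.
Proof. intros Hpq Hp. apply mem_derivable. apply (der_mp _ p); apply der_hyp; auto. Qed.

Lemma mem_theorem (w : prime_theory) p : iml1_theorem p -> mem w p.
Proof. intro H. apply mem_derivable, der_theorem, H. Qed.

Lemma mem_ipc (w : prime_theory) p : ipc_axiom p -> mem w p.
Proof. intro H. apply mem_theorem, thm_axiom, Ax_ipc, H. Qed.

Definition subtheory (w u : prime_theory) : Prop := forall x, mem w x -> mem u x.

Definition delta_accessible (w u : prime_theory) : Prop :=
  forall x, mem w (Delta x) -> mem u x.

Definition canonical_N (w : prime_theory) (X : prime_theory -> Prop) : Prop :=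
  (forall u, subtheory w u -> X u) /\ (forall u, X u -> delta_accessible w u).

Definition canonical_V (n : nat) (w : prime_theory) : Prop := mem w (Var n).

Lemma subtheory_delta_accessible w u : subtheory w u -> delta_accessible w u.
Proof.
  intros Hwu x Hx. apply Hwu, (mem_mp _ (Delta x)); [|exact Hx].
  apply mem_theorem, thm_axiom, Ax_T.
Qed.

Lemma bigcapN_canonical w u : bigcapN _ canonical_N w u <-> subtheory w u.
Proof.
  split.
  - intro H. apply H. split; auto using subtheory_delta_accessible.
  - intros H X [HX _]. auto.
Qed.

Lemma bigcupN_canonical w u : bigcupN _ canonical_N w u <-> delta_accessible w u.
Proof.
  split.
  - intros [X [[_ HX] Hu]]. auto.
  - intro H. exists (delta_accessible w). repeat split; auto.
    apply subtheory_delta_accessible.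
Qed.

Lemma canonical_model_spec (w0 : prime_theory) :
  nIML1_model prime_theory canonical_N canonical_V.
Proof.
  split; [refine (conj (inhabits w0) (conj _ (conj _ (conj _ (conj _ _)))))|].
  - intro w. apply bigcapN_canonical. intros x Hx. exact Hx.
  - intro w. split.
    + intros u Hu. apply bigcapN_canonical, Hu.
    + intros u Hu. apply subtheory_delta_accessible, bigcapN_canonical, Hu.
  - intros w u Hwu x Hux. rewrite bigcapN_canonical in *. intros y Hy. auto.
  - intros w X Hcap Hcup. split.
    + intros u Hu. apply Hcap, bigcapN_canonical, Hu.
    + intros u Hu. apply bigcupN_canonical, Hcup, Hu.
  - intros w u Hwu x Hux. rewrite bigcapN_canonical in Hwu.
    rewrite bigcupN_canonical in *. intros y Hy. apply Hux, Hwu, Hy.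
  - intros n w Hw x Hx. apply bigcapN_canonical in Hx. apply Hx, Hw.
Qed.

Lemma mem_delta_of_derivable (w : prime_theory) p :
  derivable (fun r => mem w (Delta r)) p -> mem w (Delta p).
Proof.
  induction 1 as [p Hp|p Hp|p q _ IHpq _ IHp]; auto.
  - apply mem_theorem, thm_rn, Hp.
  - apply (mem_mp _ (Delta p)); [|exact IHp].
    apply (mem_mp _ (Delta (Imp p q))); [|exact IHpq].
    apply mem_theorem, thm_axiom, Ax_K.
Qed.

Lemma imp_countermodel (w : prime_theory) p q :
  ~ mem w (Imp p q) -> exists u, subtheory w u /\ mem u p /\ ~ mem u q.
Proof.
  intro Hpq.
  assert (Hnd : ~ derivable (extend (mem w) p) q).
  { intro D. apply Hpq, mem_derivable, deduction, D. }
  destruct (lindenbaum _ _ Hnd) as [u [Hu Huq]].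
  exists u. repeat split; auto.
  - intros x Hx. apply Hu. left. exact Hx.
  - apply Hu. right. reflexivity.
Qed.

Lemma delta_countermodel (w : prime_theory) p :
  ~ mem w (Delta p) -> exists u, delta_accessible w u /\ ~ mem u p.
Proof.
  intro Hp.
  assert (Hnd : ~ derivable (fun r => mem w (Delta r)) p).
  { intro D. apply Hp, mem_delta_of_derivable, D. }
  destruct (lindenbaum _ _ Hnd) as [u [Hu Hup]]. exists u. auto.
Qed.

Lemma truth_lemma p (w : prime_theory) :
  forces _ canonical_N canonical_V w p <-> mem w p.
Proof.
  revert w.
  induction p as [n| |p1 IH1 p2 IH2|p1 IH1 p2 IH2|p1 IH1 p2 IH2|p IH];
    intro w; simpl; try setoid_rewrite bigcapN_canonical;
    try setoid_rewrite bigcupN_canonical.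
  - reflexivity.
  - split; [tauto | apply mem_consistent].
  - rewrite IH1, IH2. split.
    + intros [H1 H2]. apply (mem_mp _ p2); [apply (mem_mp _ p1)|]; auto.
      apply mem_ipc, A5.
    + intro H. split; [apply (mem_mp _ (And p1 p2))|apply (mem_mp _ (And p1 p2))];
        auto; apply mem_ipc; constructor.
  - rewrite IH1, IH2. split.
    + intros [H|H]; [apply (mem_mp _ p1)|apply (mem_mp _ p2)];
        auto; apply mem_ipc; constructor.
    + apply mem_prime.
  - setoid_rewrite IH1. setoid_rewrite IH2. split.
    + intro H. apply NNPP. intro Hn.
      destruct (imp_countermodel _ _ _ Hn) as [u [Hwu [Hu1 Hu2]]].
      destruct (H u Hwu); contradiction.
    + intros H u Hwu. destruct (classic (mem u p1)) as [H1|H1]; auto.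
      right. apply (mem_mp _ p1); auto.
  - setoid_rewrite IH. split; [|auto].
    intro H. apply NNPP. intro Hn.
    destruct (delta_countermodel _ _ Hn) as [u [Hwu Hu]]. auto.
Qed.

Theorem mainTheorem3 (Gamma : formula -> Prop) (phi : formula) :
  IML1_theory Gamma -> ~ Gamma phi ->
  exists (W : Type) (N : W -> (W -> Prop) -> Prop) (V : nat -> W -> Prop) (v : W),
    nIML1_model W N V /\
    (forall psi, Gamma psi -> forces W N V v psi) /\
    ~ forces W N V v phi.
Proof.
  intros HGamma Hphi.
  assert (Hnd : ~ derivable Gamma phi).
  { intro D. apply Hphi, IML1_theory_derivable; assumption. }
  destruct (lindenbaum _ _ Hnd) as [v [HGv Hv]].
  exists prime_theory, canonical_N, canonical_V, v.
  split; [|split].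
  - apply canonical_model_spec, v.
  - intros psi Hpsi. apply truth_lemma, HGv, Hpsi.
  - rewrite truth_lemma. exact Hv.
Qed.
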